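(* Let $\mathbb{F}$ be a field and let $\mathcal{C}_2 \subsetneqq \mathcal{C}_1 \subseteq \mathbb{F}^{m \times n}$ be linear codes with $\ell = \dim(\mathcal{C}_1) - \dim(\mathcal{C}_2)$. Then for every $1 \leq r \leq \ell$, $$d_{M,r}(\mathcal{C}_1,\mathcal{C}_2) \leq n - \left\lceil \frac{\ell - r + 1}{m} \right\rceil + 1.$$ In particular, $\dim(\mathcal{C}_1) - \dim(\mathcal{C}_2) \leq \max\{m,n\}(\min\{m,n\} - d_R(\mathcal{C}_1,\mathcal{C}_2) + 1)$.
   Context: ${\rm Row}(C)$ is the row space of a matrix $C$ and ${\rm Rk}(C) = \dim {\rm Row}(C)$. For a subspace $\mathcal{L} \subseteq \mathbb{F}^n$, $\mathcal{V}_\mathcal{L} = \{V \in \mathbb{F}^{m\times n} \mid {\rm Row}(V) \subseteq \mathcal{L}\}$. For nested linear codes and $1 \le r \le \ell$, $d_{M,r}(\mathcal{C}_1,\mathcal{C}_2) = \min\{\dim \mathcal{L} \mid \mathcal{L} \subseteq \mathbb{F}^n \text{ subspace}, \dim(\mathcal{C}_1 \cap \mathcal{V}_\mathcal{L}) - \dim(\mathcal{C}_2 \cap \mathcal{V}_\mathcal{L}) \geq r\}$, and $d_R(\mathcal{C}_1,\mathcal{C}_2) = \min\{{\rm Rk}(C) \mid C \in \mathcal{C}_1 \setminus \mathcal{C}_2\}$. *)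

From HB Require Import structures.
From mathcomp Require Import all_boot all_order all_algebra.
From mathcomp Require Import boolp.
Set Implicit Arguments. Unset Strict Implicit. Unset Printing Implicit Defensive.
Import GRing.Theory.
Local Open Scope ring_scope.

(* Codes are subspaces of the vector space 'M[F]_(m, n); subspaces of F^n are
   {vspace 'rV[F]_n}.  Row(V) is spanned by the rows  row i V. *)

(* V_L = { V in F^{m x n} | Row(V) <= L }  =  { V | forall i, row i V \in L }. *)
Definition VL (F : fieldType) (m n : nat) (L : {vspace 'rV[F]_n})
  : {vspace 'M[F]_(m, n)} :=
  (\bigcap_(i < m) (linfun (row i : 'M[F]_(m, n) -> 'rV[F]_n)) @^-1: L)%VS.

Definition gapL (F : fieldType) (m n : nat) (C1 C2 : {vspace 'M[F]_(m, n)})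
  (L : {vspace 'rV[F]_n}) : nat :=
  (\dim (C1 :&: VL m L) - \dim (C2 :&: VL m L))%N.

Definition dM_pred (F : fieldType) (m n : nat) (C1 C2 : {vspace 'M[F]_(m, n)})
  (r : nat) : pred nat :=
  fun k => `[< exists L : {vspace 'rV[F]_n}, \dim L = k /\ (r <= gapL C1 C2 L)%N >].

(* d_{M,r}(C1,C2) = min { dim L | gap(L) >= r }  (0 if the set is empty,
   which never happens for 1 <= r <= dim C1 - dim C2). *)
Definition dMr (F : fieldType) (m n : nat) (C1 C2 : {vspace 'M[F]_(m, n)})
  (r : nat) : nat :=
  match pselect (exists k, dM_pred C1 C2 r k) with
  | left e => ex_minn e
  | right _ => 0%N
  end.

Definition dR_pred (F : fieldType) (m n : nat) (C1 C2 : {vspace 'M[F]_(m, n)})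
  : pred nat :=
  fun k => `[< exists C : 'M[F]_(m, n),
               [/\ C \in C1, C \notin C2 & \rank C = k] >].

(* d_R(C1,C2) = min { Rk(C) | C in C1 \ C2 }  (0 if C1 \ C2 is empty). *)
Definition dR (F : fieldType) (m n : nat) (C1 C2 : {vspace 'M[F]_(m, n)}) : nat :=
  match pselect (exists k, dR_pred C1 C2 k) with
  | left e => ex_minn e
  | right _ => 0%N
  end.

Definition ceildiv (a b : nat) : nat := ((a + b.-1) %/ b)%N.

(* The space V_L is cut out by the m conditions "row i lies in L",
   each of codimension at most n - dim L, so it has codimension at most
   m (n - dim L) and the gap dim(C1 /\ V_L) - dim(C2 /\ V_L) is at least
   dim C1 - dim C2 - m (n - dim L).  Taking dim L = n - floor((l - r) / m)
   gives the bound on d_{M,r}.  Conversely every matrix of V_L has rank at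
   most dim L, so if dim L = d_R - 1 then C1 /\ V_L lies in C2 and the gap
   vanishes, whence l <= m (n - d_R + 1); transposing swaps m and n. *)
From HB Require Import structures.
From mathcomp Require Import all_boot all_order all_algebra.
From mathcomp Require Import boolp zify.
Import GRing.Theory Num.Theory.
Local Open Scope ring_scope.
Local Open Scope nat_scope.
Set Implicit Arguments. Unset Strict Implicit.

Section Codimension.
Variables (K : fieldType) (vT : vectType K).

Lemma dimv_cap_ge (U V : {vspace vT}) :
  \dim U + \dim V <= \dim (U :&: V) + \dim {:vT}.
Proof. by rewrite -dimv_sum_cap addnC leq_add2l dimvS ?subvf. Qed.

Lemma codimv_bigcap (I : Type) (s : seq I) (P : pred I) (Us : I -> {vspace vT}) :
  \dim {:vT} - \dim (\bigcap_(i <- s | P i) Us i)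
     <= \sum_(i <- s | P i) (\dim {:vT} - \dim (Us i)).
Proof.
elim/big_rec2: _ => [|i c U _ IH]; first by rewrite subnn.
by have := dimv_cap_ge (Us i) U; have := dimvS (subvf U); lia.
Qed.

Lemma exists_vspace_dim k : k <= \dim {:vT} -> exists U : {vspace vT}, \dim U = k.
Proof.
move=> le_k; have := basis_free (vbasisP {:vT}).
rewrite -(cat_take_drop k (vbasis {:vT})) => /catl_free/eqP free_k.
by exists <<take k (vbasis {:vT})>>%VS; rewrite free_k size_takel ?size_tuple.
Qed.

Lemma codim_lpreim (aT : vectType K) (f : 'Hom(aT, vT)) (W : {vspace vT}) :
  \dim {:aT} - \dim (f @^-1: W) <= \dim {:vT} - \dim W.
Proof.
have dim_img := limg_ker_dim f fullv; rewrite capfv in dim_img.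
have dim_preim := limg_ker_dim f (f @^-1: W)%VS.
rewrite -lpreim_cap_limg lpreimK ?capvSr // lpreim_cap_limg in dim_preim.
have ker_sub : (lker f <= f @^-1: W)%VS by rewrite -lpreim0 lpreimS ?sub0v.
rewrite (capv_idPr ker_sub) in dim_preim.
have := dimv_cap_ge W (limg f); have := dimvS (subvf W).
by move: dim_img dim_preim; lia.
Qed.

End Codimension.

Section RowSpaces.
Variables (F : fieldType) (m n : nat).
Implicit Types (L : {vspace 'rV[F]_n}) (A : 'M[F]_(m, n)).

Lemma dimv_rV : \dim {:'rV[F]_n} = n.
Proof. by rewrite dimvf dim_matrix mul1r. Qed.

Lemma dimv_M : \dim {:'M[F]_(m, n)} = m * n.
Proof. by rewrite dimvf dim_matrix. Qed.

Lemma dimv_M_le (C : {vspace 'M[F]_(m, n)}) : \dim C <= m * n.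
Proof. by rewrite -dimv_M dimvS ?subvf. Qed.

Lemma dimv_M_gt0 (C : {vspace 'M[F]_(m, n)}) : 0 < \dim C -> 0 < m.
Proof. by move/leq_trans/(_ (dimv_M_le C)); rewrite muln_gt0 => /andP[]. Qed.

Lemma row_VL L A i : A \in VL m L -> row i A \in L.
Proof.
move/(subvP (bigcapv_inf (P := xpredT) i isT (subvv _))).
by rewrite -memv_preim lfunE.
Qed.

Lemma rank_VL L A : A \in VL m L -> \rank A <= \dim L.
Proof.
move=> A_L; pose B := \matrix_(j < \dim L) (vbasis L)`_j.
pose X := \matrix_(i < m, j < \dim L) coord (vbasis L) j (row i A).
have -> : A = X *m B.
  apply/row_matrixP => i; rewrite row_mul mulmx_sum_row.
  rewrite {1}(coord_vbasis (row_VL i A_L)).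
  by apply: eq_bigr => j _; rewrite !mxE rowK.
exact: leq_trans (mxrankM_maxl _ _) (rank_leq_col _).
Qed.

Lemma codim_VL L : \dim {:'M[F]_(m, n)} - \dim (VL m L) <= m * (n - \dim L).
Proof.
apply: leq_trans (codimv_bigcap _ _ _) _.
rewrite -[X in _ <= X * _]card_ord -sum_nat_const leq_sum // => i _.
by rewrite -[X in _ <= X - _]dimv_rV codim_lpreim.
Qed.

Lemma gapL_ge (C1 C2 : {vspace 'M[F]_(m, n)}) L :
  \dim C1 - \dim C2 - m * (n - \dim L) <= gapL C1 C2 L.
Proof.
have := dimv_cap_ge C1 (VL m L); have := codim_VL L.
have := dimvS (subvf (VL m L)); have := dimvS (capvSl C2 (VL m L)).
rewrite /gapL; lia.
Qed.

Lemma dMr_le_dim (C1 C2 : {vspace 'M[F]_(m, n)}) r L :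
  r <= gapL C1 C2 L -> dMr C1 C2 r <= \dim L.
Proof.
move=> r_gap; have PL : dM_pred C1 C2 r (\dim L) by apply/asboolP; exists L.
rewrite /dMr; case: pselect => [ex | []]; last by exists (\dim L).
by case: ex_minnP => k _; apply.
Qed.

Lemma dMr_bound (C1 C2 : {vspace 'M[F]_(m, n)}) r :
  0 < m -> r <= \dim C1 - \dim C2 ->
  dMr C1 C2 r + (\dim C1 - \dim C2 - r) %/ m <= n.
Proof.
move=> m_gt0 r_le; set q := _ %/ m.
have qm : q * m <= \dim C1 - \dim C2 - r by apply: leq_divM.
have dimC1 := dimv_M_le C1.
have q_le : q <= n.
  by rewrite -(leq_pmul2r m_gt0); apply: leq_trans qm _; rewrite (mulnC n); lia.
have [L dimL] : exists L : {vspace 'rV[F]_n}, \dim L = n - q.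
  by apply: exists_vspace_dim; rewrite dimv_rV leq_subr.
have : dMr C1 C2 r <= n - q.
  rewrite -dimL dMr_le_dim //; apply: leq_trans (gapL_ge C1 C2 L).
  by rewrite dimL subKn // mulnC; lia.
lia.
Qed.

Lemma singleton_bound (C1 C2 : {vspace 'M[F]_(m, n)}) k : k <= n ->
  (forall A, A \in C1 -> A \notin C2 -> k < \rank A) ->
  \dim C1 - \dim C2 <= m * (n - k).
Proof.
move=> k_le rank_gt.
have [L dimL] : exists L : {vspace 'rV[F]_n}, \dim L = k.
  by apply: exists_vspace_dim; rewrite dimv_rV.
have C1L_sub : (C1 :&: VL m L <= C2 :&: VL m L)%VS.
  apply/subvP => A /memv_capP[A_C1 A_L]; rewrite memv_cap A_L andbT.
  apply: contraT => /(rank_gt A A_C1); rewrite ltnNge -dimL rank_VL //.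
have gap0 : gapL C1 C2 L = 0 by apply/eqP; rewrite subn_eq0 dimvS.
by have := gapL_ge C1 C2 L; rewrite gap0 dimL leqn0 subn_eq0.
Qed.

End RowSpaces.

Lemma singleton_bound_tr (F : fieldType) (m n : nat) (C1 C2 : {vspace 'M[F]_(m, n)}) k :
  k <= m -> (forall A, A \in C1 -> A \notin C2 -> k < \rank A) ->
  \dim C1 - \dim C2 <= n * (m - k).
Proof.
move=> k_le rank_gt; pose f := linfun (trmx : 'M[F]_(m, n) -> 'M[F]_(n, m)).
have dim_f C : \dim (f @: C)%VS = \dim C.
  apply: limg_dim_eq; suff /eqP -> : lker f == 0%VS by rewrite capv0.
  by apply/lker0P => x y; rewrite !lfunE; apply: trmx_inj.
rewrite -(dim_f C1) -(dim_f C2); apply: singleton_bound => // _ /memv_imgP[A A_C1 ->].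
rewrite lfunE mxrank_tr => fA_C2; apply: rank_gt => //; apply: contra fA_C2 => A_C2.
by have := memv_img f A_C2; rewrite lfunE.
Qed.

Lemma dR_attained (F : fieldType) (m n : nat) (C1 C2 : {vspace 'M[F]_(m, n)}) A0 :
  A0 \in C1 -> A0 \notin C2 ->
  exists2 C, [/\ C \in C1, C \notin C2 & \rank C = dR C1 C2] &
    forall A, A \in C1 -> A \notin C2 -> dR C1 C2 <= \rank A.
Proof.
move=> A0_C1 A0_C2; rewrite /dR; case: pselect => [ex | []]; last first.
  by exists (\rank A0); apply/asboolP; exists A0.
case: ex_minnP => d /asboolP[C [C_C1 C_C2 rkC]] d_min.
exists C => // A A_C1 A_C2.
by apply: d_min; apply/asboolP; exists A.
Qed.

Section SingletonBound.
Variables (F : fieldType) (m n : nat) (C1 C2 : {vspace 'M[F]_(m, n)}) (A0 : 'M[F]_(m, n)).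
Hypotheses (A0_C1 : A0 \in C1) (A0_C2 : A0 \notin C2).

Lemma dR_gt0_le_min : 0 < dR C1 C2 <= minn m n.
Proof.
have [C [_ C_C2 <-] _] := dR_attained A0_C1 A0_C2.
rewrite leq_min rank_leq_row rank_leq_col lt0n mxrank_eq0 !andbT.
by apply: contraNneq C_C2 => ->; apply: mem0v.
Qed.

Lemma singleton_bound_dR : \dim C1 - \dim C2 <= maxn m n * (minn m n - (dR C1 C2).-1).
Proof.
have [_ _ dR_min] := dR_attained A0_C1 A0_C2.
have /andP[dR_gt0] := dR_gt0_le_min; rewrite leq_min => /andP[dR_le_m dR_le_n].
have rank_gt A : A \in C1 -> A \notin C2 -> (dR C1 C2).-1 < \rank A.
  by move=> A_C1 A_C2; rewrite prednK // dR_min.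
case: (leqP m n) => _.
  exact: singleton_bound_tr (leq_trans (leq_pred _) dR_le_m) rank_gt.
exact: singleton_bound (leq_trans (leq_pred _) dR_le_n) rank_gt.
Qed.

End SingletonBound.

Lemma ceildivS a b : 0 < b -> ceildiv a.+1 b = (a %/ b).+1.
Proof.
move=> b_gt0; rewrite /ceildiv addSn -addnS prednK // -[b in _ + b]mul1n.
by rewrite divnDMl // addn1.
Qed.

Unset Implicit Arguments.
Local Open Scope ring_scope.
Theorem theorem5 (F : fieldType) (m n : nat) (C1 C2 : {vspace 'M[F]_(m, n)}) :
  (C2 <= C1)%VS -> C2 != C1 ->
  let l := (\dim C1 - \dim C2)%N in
  (forall r : nat, (1 <= r <= l)%N ->
     (dMr C1 C2 r)%:Z <= n%:Z - (ceildiv (l - r + 1) m)%:Z + 1)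
  /\ l%:Z <= (maxn m n)%:Z * ((minn m n)%:Z - (dR C1 C2)%:Z + 1).
Proof.
move=> C21 C21_neq l.
have [A0 A0_C1 A0_C2] : exists2 A, A \in C1 & A \notin C2.
  by apply/subvPn; apply: contra C21_neq => C12; rewrite eqEsubv C21.
split=> [r /andP[r_gt0 r_le] | ].
  have m_gt0 : (0 < m)%N by apply: (dimv_M_gt0 (C := C1)); rewrite /l in r_le; lia.
  have := dMr_bound m_gt0 r_le.
  by rewrite addn1 ceildivS // -/l; lia.
have := singleton_bound_dR A0_C1 A0_C2; have := dR_gt0_le_min A0_C1 A0_C2.
rewrite -/l; move: (dR C1 C2) => d /andP[d_gt0 d_le_min] bound.
have -> : (minn m n)%:Z - d%:Z + 1 = (minn m n - d.-1)%N by lia.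
by rewrite -PoszM lez_nat.
Qed.
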